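(* Let $p\in\{3,4,\dots\}$, $a\ge0$, $b>0$ satisfy either ($a>0$ and $b\in[p/2-1,p/2]$) or ($a=0$ and $b\in[p/2-1,p/2)$). There exists a constant $c\in(0,\infty)$ (possibly depending on $p,a,b$) such that $\frac{w_{k-1}(n)}{w_{k-1}(n+1)}\le c$ for all $n\in\mathbb{Z}^+$ and all $k\in\{1,2,3\}$.
   Context: $\mathbb{Z}^+=\{0,1,2,\dots\}$; $g_0(z)=(a+z)^{-b}$; for $n\in\mathbb{Z}^+$ and $k\in\{0,1,2,3\}$, $w_k(n)=\int_0^\infty\frac{g_0(z)(z/2)^{n+p/2+k-1}e^{-z/2}}{2\Gamma(n+p/2)}dz$. *)

From HB Require Import structures.
From mathcomp Require Import all_boot all_order all_algebra.
From mathcomp Require Import all_classical all_reals all_analysis.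
Set Implicit Arguments. Unset Strict Implicit. Unset Printing Implicit Defensive.
Import Order.TTheory GRing.Theory Num.Theory.
Local Open Scope classical_set_scope.
Local Open Scope ring_scope.

Definition Gammaf {R : realType} (s : R) : R :=
  Rintegral (@lebesgue_measure R) `]0, +oo[
    (fun t => t `^ (s - 1) * expR (- t)).

Definition g0 {R : realType} (a b : R) (z : R) : R := (a + z) `^ (- b).

Definition w {R : realType} (p : nat) (a b : R) (k n : nat) : R :=
  Rintegral (@lebesgue_measure R) `]0, +oo[
    (fun z => g0 a b z * (z / 2) `^ (n%:R + p%:R / 2 + k%:R - 1)
              * expR (- (z / 2)) / (2 * Gammaf (n%:R + p%:R / 2))).

(* With m = n + p/2 and K(s) = \int_0^oo g0(z) (z/2)^s e^(-z/2) dz we have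
   w_j(n) = K(m + j - 1) / (2 Gamma(m)).  Integrating by parts gives
   Gamma(m + 1) <= m Gamma(m) and, since the logarithmic derivative of g0 is
   -b / (a + z) with b z / (a + z) <= b, also (s + 1 - b) K(s) <= K(s + 1).
   Hence w_j(n) / w_j(n + 1) <= m / (m + j - b) <= 1 + p/2 for n >= 1; the three
   ratios at n = 0, where m + j - b may vanish, are absorbed into the constant.
   The integrations by parts are carried out on the segments [1/(i+2), i+2],
   where each boundary term either has a favourable sign or is O(1/i). *)

From HB Require Import structures.
From mathcomp Require Import all_boot all_order all_algebra.
From mathcomp Require Import all_classical all_reals all_analysis.
From mathcomp Require Import measurable_realfun ring lra.
Set Implicit Arguments. Unset Strict Implicit. Unset Printing Implicit Defensive.
Import Order.TTheory GRing.Theory Num.Theory.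
Import numFieldNormedType.Exports.
Local Open Scope classical_set_scope.
Local Open Scope ring_scope.

Lemma fineZ {R : realType} (r : R) (x : \bar R) : fine (r%:E * x)%E = r * fine x.
Proof.
case: x => [y| |] //=; rewrite mulr0.
- have [r0|r0|->] := ltgtP r 0; last by rewrite mul0e.
  + by rewrite lt0_muley ?lte_fin.
  + by rewrite gt0_muley ?lte_fin.
- have [r0|r0|->] := ltgtP r 0; last by rewrite mul0e.
  + by rewrite lt0_muleNy ?lte_fin.
  + by rewrite gt0_muleNy ?lte_fin.
Qed.

Lemma fine_le_or_eq0 {R : realType} (x y : \bar R) :
  (0 <= x)%E -> (x <= y)%E -> fine x <= fine y \/ fine y = 0.
Proof.
case: y => [y| |] x0 xy; [left|by right|by move: (le_trans x0 xy)].
have xfin : x \is a fin_num by rewrite ge0_fin_numE // (le_lt_trans xy) ?ltry.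
by rewrite -lee_fin fineK.
Qed.

Section ge0_Rintegral.
Context d (T : measurableType d) (R : realType) (mu : {measure set T -> \bar R}).

Lemma ge0_RintegralZl (D : set T) (f : T -> R) (k : R) : measurable D ->
  measurable_fun D f -> (forall x, D x -> 0 <= f x) -> 0 <= k ->
  \int[mu]_(x in D) (k * f x) = k * \int[mu]_(x in D) f x.
Proof.
move=> mD mf f0 k0.
by rewrite /Rintegral -fineZ -ge0_integralZl_EFin //; exact/measurable_EFinP.
Qed.

(* The second alternative accounts for an infinite integral, which [Rintegral]
   sends to [0]. *)
Lemma ge0_Rintegral_le_or_eq0 (D : set T) (u v : T -> R) :
  (forall x, D x -> 0 <= u x) ->
  (\int[mu]_(x in D) (u x)%:E <= \int[mu]_(x in D) (v x)%:E)%E ->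
  \int[mu]_(x in D) u x <= \int[mu]_(x in D) v x \/ \int[mu]_(x in D) v x = 0.
Proof.
move=> u0; apply: fine_le_or_eq0; apply: integral_ge0 => x Dx.
by rewrite lee_fin u0.
Qed.

End ge0_Rintegral.

Section integral_on_positive_reals.
Context {R : realType}.
Local Notation mu := (@lebesgue_measure R).
Local Notation Pos := (`]0, +oo[%classic : set R).

Definition pos_continuous (u : R -> R) := forall x : R, 0 < x -> {for x, continuous u}.

Lemma is_derive1_continuous (f : R -> R) (x df : R) :
  is_derive x 1 f df -> {for x, continuous f}.
Proof. by move=> [fx _]; exact/differentiable_continuous/derivable1_diffP. Qed.

Lemma pos_continuousB (u v : R -> R) :
  pos_continuous u -> pos_continuous v -> pos_continuous (u \- v).
Proof. by move=> cu cv x x0; apply: continuousB; [exact: cu|exact: cv]. Qed.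

Lemma pos_continuous_measurable (u : R -> R) :
  pos_continuous u -> measurable_fun Pos u.
Proof.
move=> cu; apply: open_continuous_measurable_fun; first exact: rray_open.
by move=> x; rewrite inE/= in_itv/= andbT => /cu.
Qed.

Definition pos_segment (i : nat) : set R := `[i.+2%:R^-1, i.+2%:R].

Lemma pos_segment_sub i : pos_segment i `<=` Pos.
Proof.
move=> x; rewrite /pos_segment/= !in_itv/= andbT => /andP[+ _].
by apply: lt_le_trans; rewrite invr_gt0 ltr0n.
Qed.

Lemma pos_segment_nondecreasing :
  {homo pos_segment : n m / (n <= m)%N >-> (n <= m)%O}.
Proof.
move=> n m nm; apply/subsetPset; apply: subset_itv; rewrite bnd_simp.
  by rewrite lef_pV2 ?posrE ?ltr0n // ler_nat.
by rewrite ler_nat.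
Qed.

Lemma bigcup_pos_segment : \bigcup_i pos_segment i = Pos.
Proof.
apply/seteqP; split; first by move=> x [i _]; exact: pos_segment_sub.
move=> x; rewrite /= in_itv/= andbT => x0.
have x1 : 0 < x^-1 by rewrite invr_gt0.
have := archi_boundP (addr_ge0 (ltW x0) (ltW x1)).
set N := Num.Def.archi_bound _ => xN.
exists N => //; rewrite /pos_segment/= in_itv/= -[x]invrK lef_pV2 ?posrE ?ltr0n //.
by rewrite invrK -[N.+2]addn2 natrD; apply/andP; split; lra.
Qed.

Lemma ge0_integral_pos_le_segments (u : R -> R) (v : \bar R) (C : R) :
  measurable_fun Pos u -> (forall x : R, 0 < x -> 0 <= u x) ->
  (forall i, (\int[mu]_(x in pos_segment i) (u x)%:E <= v + (C / i.+1%:R)%:E)%E) ->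
  (\int[mu]_(x in Pos) (u x)%:E <= v)%E.
Proof.
move=> mfu u0 hi.
have mS i : measurable (pos_segment i) by exact: measurable_itv.
have uS0 i x : pos_segment i x -> (0 <= (u x)%:E)%E.
  by move/pos_segment_sub; rewrite /= in_itv/= andbT lee_fin => /u0.
have muS i : measurable_fun (pos_segment i) (fun x => (u x)%:E).
  apply/measurable_EFinP.
  by apply: (measurable_funS (E := Pos)) => //; exact: pos_segment_sub.
have := ge0_nondecreasing_set_cvg_integral (mu := mu)
  pos_segment_nondecreasing mS muS uS0.
rewrite bigcup_pos_segment => cvS.
case: v hi => [r| |] hi; [|by rewrite leey|].
- apply/lee_addgt0Pr => eps eps0; apply: (cvge_to_le cvS).
  have := archi_boundP (divr_ge0 (normr_ge0 C) (ltW eps0)).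
  set N := Num.Def.archi_bound _ => CN.
  exists N => // i /= Ni; apply: le_trans (hi i) _.
  rewrite -EFinD lee_fin lerD2l ler_pdivrMr ?ltr0n //.
  have : `|C| / eps < i.+1%:R by apply: lt_le_trans CN _; rewrite ler_nat ltnW.
  rewrite ltr_pdivrMr // => CNi; have := ler_norm C; nra.
- have := hi 0%N; rewrite addNye leeNy_eq => /eqP S0.
  have : (0 <= \int[mu]_(x in pos_segment 0) (u x)%:E)%E.
    by apply: integral_ge0; exact: uS0.
  by rewrite S0.
Qed.

Lemma Rintegral_cc_FTC2 (f F : R -> R) (e X : R) : 0 < e -> e < X ->
  pos_continuous f -> (forall x : R, 0 < x -> is_derive x 1 F (f x)) ->
  \int[mu]_(x in `[e, X]) f x = F X - F e.
Proof.
move=> e0 eX cf dF.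
have epos (x : R) : e <= x -> 0 < x by exact: lt_le_trans.
have eXpos (x : R) : x \in `[e, X] -> 0 < x by rewrite in_itv/= => /andP[/epos].
have cfw : {within `[e, X], continuous f}.
  by apply: continuous_in_subspaceT => x /[1!inE] /eXpos /cf.
have cF (x : R) : 0 < x -> {for x, continuous F}.
  by move=> x0; exact: is_derive1_continuous (dF x x0).
have FLR : derivable_oo_LRcontinuous F e X.
  split.
  - by move=> x; rewrite in_itv/= => /andP[/ltW/epos/dF[]].
  - exact/cvg_at_right_filter/cF.
  - exact/cvg_at_left_filter/cF/(lt_trans e0 eX).
have F'f : {in `]e, X[, F^`()%classic =1 f}.
  move=> x; rewrite in_itv/= => /andP[/ltW/epos x0 _].
  by rewrite derive1E; have [_ ->] := dF x x0.
by rewrite /Rintegral (continuous_FTC2 eX cfw FLR F'f).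
Qed.

Lemma pos_segment_integrable (h : R -> R) i :
  pos_continuous h -> mu.-integrable (pos_segment i) (EFin \o h).
Proof.
move=> ch; apply: continuous_compact_integrable; first exact: segment_compact.
apply: continuous_in_subspaceT => x /[1!inE] /pos_segment_sub.
by rewrite /= in_itv/= andbT => /ch.
Qed.

Lemma integral_pos_segmentE (h : R -> R) i : pos_continuous h ->
  (\int[mu]_(x in pos_segment i) (h x)%:E)%E = (\int[mu]_(x in pos_segment i) h x)%:E.
Proof.
move=> ch; rewrite /Rintegral fineK //.
by apply: integrable_fin_num; [exact: measurable_itv|exact: pos_segment_integrable].
Qed.

Lemma ge0_integral_pos_le_derive (u g v F : R -> R) (C : R) :
  pos_continuous u -> pos_continuous g -> pos_continuous v ->
  (forall x : R, 0 < x -> 0 <= u x <= g x) -> (forall x : R, 0 < x -> 0 <= v x) ->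
  (forall x : R, 0 < x -> is_derive x 1 F (g x - v x)) ->
  (forall i : nat, F i.+2%:R - F i.+2%:R^-1 <= C / i.+1%:R) ->
  (\int[mu]_(x in Pos) (u x)%:E <= \int[mu]_(x in Pos) (v x)%:E)%E.
Proof.
move=> cu cg cv ug v0 dF FC.
apply: (ge0_integral_pos_le_segments (C := C)) => [|x /ug/andP[]//|i].
  exact: pos_continuous_measurable.
have mS : measurable (pos_segment i) by exact: measurable_itv.
have e0 : 0 < i.+2%:R^-1 :> R by rewrite invr_gt0 ltr0n.
have eX : i.+2%:R^-1 < i.+2%:R :> R.
  by rewrite (@lt_le_trans _ _ 1) ?invf_lt1 ?ltr1n ?ler1n.
have gvF : \int[mu]_(x in pos_segment i) g x =
    \int[mu]_(x in pos_segment i) v x + (F i.+2%:R - F i.+2%:R^-1).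
  rewrite -(Rintegral_cc_FTC2 e0 eX (pos_continuousB cg cv) dF) -RintegralD //.
  - by apply: eq_Rintegral => x _; rewrite /= addrC subrK.
  - exact: pos_segment_integrable.
  - exact: pos_segment_integrable (pos_continuousB cg cv).
have ps0 x : pos_segment i x -> 0 < x.
  by move/pos_segment_sub; rewrite /= in_itv/= andbT.
apply: (@le_trans _ _ (\int[mu]_(x in pos_segment i) (g x)%:E)%E).
  apply: ge0_le_integral => //.
  - by move=> x /ps0/ug/andP[u0 _]; rewrite lee_fin.
  - exact: measurable_int _ (pos_segment_integrable i cu).
  - exact: measurable_int _ (pos_segment_integrable i cg).
  - by move=> x /ps0/ug/andP[_ ugx]; rewrite lee_fin.
rewrite integral_pos_segmentE // gvF EFinD leeD ?lee_fin // -integral_pos_segmentE //.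
apply: (@ge0_subset_integral _ _ _ mu _ _ mS (measurable_itv `]0, +oo[)).
- by apply/measurable_EFinP; exact: pos_continuous_measurable.
- by move=> x; rewrite /= in_itv/= andbT lee_fin => /v0.
- exact: pos_segment_sub.
Qed.

End integral_on_positive_reals.

Lemma powR_expRN_decay {R : realType} (r : R) : 0 <= r ->
  exists2 C : R, 0 <= C & forall y, 0 <= y -> y `^ r * expR (- y) <= C / (1 + y).
Proof.
move=> r0; have := archi_boundP r0; set N := Num.Def.archi_bound _ => rN.
pose K : R := N.+1%:R ^+ N.+1.
have K0 : 0 < K by rewrite exprn_gt0 ?ltr0n.
exists K => [|y y0]; first exact: ltW.
have y1 : 0 < 1 + y by lra.
have powN : y `^ r <= (1 + y) ^+ N.
  apply: (@le_trans _ _ ((1 + y) `^ r)).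
    by apply: ge0_ler_powR; rewrite ?nnegrE; lra.
  by rewrite -powR_mulrn; [apply: ler_powR => //; lra|lra].
have expN : ((1 + y) / N.+1%:R) ^+ N.+1 <= expR y.
  have -> : expR y = expR (y / N.+1%:R) ^+ N.+1.
    by rewrite -expRM_natl; congr expR; field.
  apply: lerXn2r; rewrite ?nnegrE ?expR_ge0 ?(divr_ge0 (ltW y1)) //.
  apply: le_trans (expR_ge1Dx _).
  by rewrite mulrDl mul1r lerD2r invf_le1 ?ltr0n // ler1n.
rewrite expr_div_n exprSr ler_pdivrMr -/K // in expN.
rewrite expRN ler_pdivlMr // mulrAC ler_pdivrMr ?expR_gt0 //.
have := powR_ge0 y r; set P := (1 + y) ^+ N in powN expN *; nra.
Qed.

Section gamma_recurrence.
Context {R : realType}.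
Local Notation mu := (@lebesgue_measure R).

Definition gamma_integrand (m t : R) := t `^ (m - 1) * expR (- t).

Lemma gamma_integrand_ge0 (m t : R) : 0 <= gamma_integrand m t.
Proof. by rewrite mulr_ge0 ?powR_ge0 ?expR_ge0. Qed.

Lemma Gammaf_ge0 (m : R) : 0 <= Gammaf m.
Proof. by apply: Rintegral_ge0 => x _; exact: gamma_integrand_ge0. Qed.

Lemma is_derive_gamma_integrand (m x : R) : 0 < x ->
  is_derive x 1 (gamma_integrand (m + 1))
    (m * gamma_integrand m x - gamma_integrand (m + 1) x).
Proof.
move=> x0.
have dexp := is_derive1_comp (is_derive_expR (- x)) (is_deriveNid x 1).
apply: is_derive_eq (is_deriveM (is_derive1_powR (m + 1 - 1) x0) dexp) _.
by rewrite /gamma_integrand addrK /GRing.scale/=; ring.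
Qed.

Lemma gamma_integrand_continuous (m : R) : pos_continuous (gamma_integrand m).
Proof.
move=> x x0; rewrite -(subrK 1 m).
exact: is_derive1_continuous (is_derive_gamma_integrand (m - 1) x0).
Qed.

Lemma Gammaf_succ_le (m : R) : 1 <= m ->
  Gammaf (m + 1) <= m * Gammaf m \/ m * Gammaf m = 0.
Proof.
move=> m1.
have -> : m * Gammaf m = \int[mu]_(x in `]0, +oo[) (m * gamma_integrand m x).
  rewrite ge0_RintegralZl //; last lra.
  - apply: pos_continuous_measurable; exact: gamma_integrand_continuous.
  - by move=> x _; exact: gamma_integrand_ge0.
apply: ge0_Rintegral_le_or_eq0 => [x _|]; first exact: gamma_integrand_ge0.
apply: (@ge0_integral_pos_le_derive _ _ (gamma_integrand (m + 1)) _
  (fun t => - gamma_integrand (m + 1) t) 1).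
- exact: gamma_integrand_continuous.
- exact: gamma_integrand_continuous.
- move=> x x0; apply: continuousM; first exact: cst_continuous.
  exact: gamma_integrand_continuous.
- by move=> x _; rewrite lexx gamma_integrand_ge0.
- by move=> x _; rewrite mulr_ge0 ?gamma_integrand_ge0 //; lra.
- move=> x x0; apply: is_derive_eq (is_deriveN (is_derive_gamma_integrand m x0)) _.
  by rewrite opprB.
move=> i; set e : R := i.+2%:R^-1.
have e0 : 0 < e by rewrite invr_gt0 ltr0n.
have e1 : e <= 1 by rewrite invf_le1 ?ltr0n ?ler1n.
have ge : gamma_integrand (m + 1) e <= e.
  rewrite /gamma_integrand addrK; apply: le_trans (ge1r_powR _ m1); last by rewrite e0.
  by rewrite ler_piMr ?powR_ge0 // expR_le1 oppr_le0 ltW.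
have ei : e <= 1 / i.+1%:R by rewrite mul1r lef_pV2 ?posrE ?ltr0n // ler_nat.
rewrite opprK addrC; apply: le_trans ei; apply: le_trans _ ge.
by rewrite lerBlDr lerDl gamma_integrand_ge0.
Qed.

End gamma_recurrence.

Section kernel_recurrence.
Context {R : realType}.
Local Notation mu := (@lebesgue_measure R).
Variables (a b : R).
Hypothesis a_ge0 : 0 <= a.

Definition w_kernel (s z : R) := g0 a b z * (z / 2) `^ s * expR (- (z / 2)).

Lemma w_kernel_ge0 (s z : R) : 0 <= w_kernel s z.
Proof. by rewrite !mulr_ge0 ?powR_ge0 ?expR_ge0. Qed.

Lemma is_derive_w_kernel (s x : R) : 0 < x ->
  is_derive x 1 (w_kernel (s + 1))
    (((s + 1 - b * x / (a + x)) * w_kernel s x - w_kernel (s + 1) x) / 2).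
Proof.
move=> x0; have ax : 0 < a + x by rewrite ltr_pwDr.
have dhalf : is_derive x 1 (fun z : R => z / 2) 2^-1.
  have := is_deriveM (f := id) (g := cst 2^-1) (x := x) (v := 1) (df := 1) (dg := 0).
  by rewrite scaler0 add0r /GRing.scale/= mulr1; apply.
have dshift : is_derive x 1 (fun z : R => a + z) 1.
  have := is_deriveD (f := cst a) (g := id) (x := x) (v := 1) (df := 0) (dg := 1).
  by rewrite add0r; apply.
have dg0 := is_derive1_comp (is_derive1_powR (- b) ax) dshift.
have dpow := is_derive1_comp (g := fun z => z / 2)
  (is_derive1_powR (s + 1) (divr_gt0 x0 (ltr0n _ 2))) dhalf.
have dexp := is_derive1_comp (g := fun z => - (z / 2))
  (is_derive_expR (- (x / 2))) (is_deriveN dhalf).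
apply: is_derive_eq (is_deriveM (is_deriveM dg0 dpow) dexp) _.
have x2 : 0 < x / 2 by rewrite divr_gt0.
rewrite /w_kernel /g0 /GRing.scale/= !fctE/= addrK.
rewrite powRB ?(gt_eqF ax) ?implybT // powRr1 ?ltW //.
rewrite powRD ?(gt_eqF x2) ?implybT // powRr1 ?ltW //.
by field; rewrite gt_eqF.
Qed.

Lemma w_kernel_continuous (s : R) : pos_continuous (w_kernel s).
Proof.
move=> x x0; rewrite -(subrK 1 s).
exact: is_derive1_continuous (is_derive_w_kernel (s - 1) x0).
Qed.

Lemma w_kernel_decay (s : R) : 0 <= b -> 0 <= s ->
  exists2 C : R, 0 <= C & forall x, 1 <= x -> w_kernel s x <= C / x.
Proof.
move=> b0 s0; have [C C0 hC] := powR_expRN_decay s0.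
exists (2 * C) => [|x x1]; first by rewrite mulr_ge0.
have g0_le1 : g0 a b x <= 1.
  rewrite /g0 -(powRr0 (a + x)) ler_powR ?oppr_le0 //.
  by rewrite (le_trans x1) // lerDr.
have x2 : 0 <= x / 2 by rewrite divr_ge0 //; lra.
have := hC _ x2; rewrite /w_kernel -mulrA.
set P := _ * expR _ => PC.
have P0 : 0 <= P by rewrite mulr_ge0 ?powR_ge0 ?expR_ge0.
apply: (@le_trans _ _ P); first by rewrite ler_piMl.
apply: le_trans PC _; rewrite ler_pdivrMr; last lra.
rewrite mulrAC ler_pdivlMr; last lra.
nra.
Qed.

Lemma w_kernel_succ_le (s : R) : 0 <= b -> b <= s + 1 ->
  (s + 1 - b) * \int[mu]_(x in `]0, +oo[) w_kernel s x
    <= \int[mu]_(x in `]0, +oo[) w_kernel (s + 1) x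
  \/ \int[mu]_(x in `]0, +oo[) w_kernel (s + 1) x = 0.
Proof.
move=> b0 bs; have d0 : 0 <= s + 1 - b by lra.
have [C C0 wC] := w_kernel_decay b0 (le_trans b0 bs).
rewrite -ge0_RintegralZl //; last first.
- by move=> x _; exact: w_kernel_ge0.
- apply: pos_continuous_measurable; exact: w_kernel_continuous.
apply: ge0_Rintegral_le_or_eq0 => [x _|]; first by rewrite mulr_ge0 ?w_kernel_ge0.
(* [psi - w_kernel (s + 1)] is the derivative of [2 * w_kernel (s + 1)], and
   [psi] dominates [(s + 1 - b) * w_kernel s] because [b x / (a + x) <= b]. *)
pose psi x := (s + 1 - b * x / (a + x)) * w_kernel s x.
apply: (@ge0_integral_pos_le_derive _ _ psi _ (fun z => 2 * w_kernel (s + 1) z) (2 * C)).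
- move=> x x0; apply: continuousM; first exact: cst_continuous.
  exact: w_kernel_continuous.
- move=> x x0; apply: continuousM; last exact: w_kernel_continuous.
  apply: continuousB; first exact: cst_continuous.
  apply: continuousM; first by apply: continuousM; [exact: cst_continuous|].
  apply: continuousV; first by rewrite gt_eqF ?ltr_pwDr.
  by apply: continuousD; [exact: cst_continuous|].
- exact: w_kernel_continuous.
- move=> x x0; rewrite mulr_ge0 ?w_kernel_ge0 //=.
  apply: ler_wpM2r; first exact: w_kernel_ge0.
  rewrite lerD2l lerN2 -mulrA ler_piMr // ler_pdivrMr ?mul1r ?lerDr //.
  by rewrite ltr_pwDr.
- by move=> x _; exact: w_kernel_ge0.
- move=> x x0; apply: is_derive_eq (is_deriveZ 2 (is_derive_w_kernel s x0)) _.
  by rewrite /GRing.scale/= mulrC divfK ?pnatr_eq0.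
move=> i; have X1 : 1 <= i.+2%:R :> R by rewrite ler1n.
have CX : C / i.+2%:R <= C / i.+1%:R.
  by rewrite ler_wpM2l // lef_pV2 ?posrE ?ltr0n // ler_nat.
rewrite -mulrA lerBlDr -[leLHS]addr0 lerD //; last by rewrite mulr_ge0 // w_kernel_ge0.
by rewrite ler_pM2l // (le_trans (wC _ X1) CX).
Qed.

End kernel_recurrence.

Lemma ratio_le_of_recurrences {R : realFieldType} (G0 G1 K0 K1 m d : R) :
  0 < m -> 0 < d -> 0 <= G0 -> 0 <= G1 -> 0 <= K0 ->
  G1 <= m * G0 \/ m * G0 = 0 -> d * K0 <= K1 \/ K1 = 0 ->
  ((2 * G0)^-1 * K0) / ((2 * G1)^-1 * K1) <= m / d.
Proof.
move=> m0 d0 G00 G10 K00 hG hK.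
have md : 0 <= m / d by rewrite divr_ge0 ?ltW.
have [->|K1n0] := eqVneq K1 0; first by rewrite mulr0 invr0 mulr0.
have [->|G0n0] := eqVneq G0 0; first by rewrite mulr0 invr0 !mul0r.
have [->|G1n0] := eqVneq G1 0; first by rewrite mulr0 invr0 mul0r invr0 mulr0.
case: hK => [hK|K10]; last by rewrite K10 eqxx in K1n0.
case: hG => [hG|/eqP]; last by rewrite mulf_eq0 (gt_eqF m0) (negbTE G0n0).
have G0p : 0 < G0 by rewrite lt_def G0n0.
have G1p : 0 < G1 by rewrite lt_def G1n0.
have K1p : 0 < K1 by rewrite lt_def K1n0 (le_trans _ hK) // mulr_ge0 // ltW.
have -> : (2 * G0)^-1 * K0 / ((2 * G1)^-1 * K1) = (K0 * G1) / (G0 * K1).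
  by field; rewrite !gt_eqF.
rewrite ler_pdivrMr ?mulr_gt0 // mulrAC ler_pdivlMr //.
nra.
Qed.

Lemma shifted_ratio_le {R : realFieldType} (N q j b : R) :
  1 <= N -> 0 <= j -> 0 <= q -> b <= q -> (N + q) / (N + q + j - b) <= 1 + q.
Proof.
move=> N1 j0 q0 bq; rewrite ler_pdivrMr; last lra.
have : (1 + q) * N <= (1 + q) * (N + q + j - b) by rewrite ler_wpM2l //; lra.
have : q <= q * N by rewrite ler_peMr.
lra.
Qed.

Lemma w_Rintegral {R : realType} (p : nat) (a b : R) (j n : nat) : 0 <= a ->
  w p a b j n = (2 * Gammaf (n%:R + p%:R / 2))^-1 *
    \int[@lebesgue_measure R]_(z in `]0, +oo[)
      w_kernel a b (n%:R + p%:R / 2 + j%:R - 1) z.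
Proof.
move=> a0; rewrite -ge0_RintegralZl //.
- by apply: eq_Rintegral => z _; rewrite mulrC.
- apply: pos_continuous_measurable; exact: w_kernel_continuous.
- by move=> z _; exact: w_kernel_ge0.
- by rewrite invr_ge0 mulr_ge0 ?Gammaf_ge0.
Qed.

Lemma w_ratio_le {R : realType} (p : nat) (a b : R) (j n : nat) :
  0 <= a -> 0 <= b -> 1 <= n%:R + p%:R / 2 :> R -> b < n%:R + p%:R / 2 + j%:R ->
  w p a b j n / w p a b j n.+1 <= (n%:R + p%:R / 2) / (n%:R + p%:R / 2 + j%:R - b).
Proof.
move=> a0 b0; rewrite !w_Rintegral // -[n.+1]addn1 natrD.
have -> : n%:R + 1 + p%:R / 2 = n%:R + p%:R / 2 + 1 :> R by ring.
move: (n%:R + p%:R / 2 : R) => m m1 bd.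
have -> : m + 1 + j%:R - 1 = (m + j%:R - 1) + 1 by ring.
apply: ratio_le_of_recurrences; rewrite ?Gammaf_ge0 //; [lra|lra| | |].
- by apply: Rintegral_ge0 => z _; exact: w_kernel_ge0.
- exact: Gammaf_succ_le.
- have := w_kernel_succ_le a0 (s := m + j%:R - 1) b0.
  by rewrite (_ : m + j%:R - 1 + 1 - b = m + j%:R - b); [apply; lra|ring].
Qed.

Theorem propositionA5 (R : realType) (p : nat) (a b : R) :
  (3 <= p)%N -> 0 <= a -> 0 < b ->
  ((0 < a /\ p%:R / 2 - 1 <= b /\ b <= p%:R / 2) \/
   (a = 0 /\ p%:R / 2 - 1 <= b /\ b < p%:R / 2)) ->
  exists c : R, 0 < c /\
    forall (n k : nat), (1 <= k <= 3)%N ->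
      w p a b k.-1 n / w p a b k.-1 n.+1 <= c.
Proof.
move=> _ a0 /ltW b0 hab.
have {hab} bq : b <= p%:R / 2 by case: hab => [[_ []]|[_ [_ /ltW]]].
have q0 : 0 <= p%:R / 2 :> R by rewrite divr_ge0 ?ler0n.
have [r r0 hr] : exists2 r : nat -> R, (forall j, 0 <= r j) &
    (forall j, w p a b j 0 / w p a b j 1 <= r j).
  exists (fun j => `|w p a b j 0 / w p a b j 1|) => j.
  - exact: normr_ge0.
  - exact: ler_norm.
exists (1 + p%:R / 2 + (r 0%N + r 1%N + r 2%N)).
move: (r0 0%N) (r0 1%N) (r0 2%N) => r00 r01 r02.
split=> [|[|n] k /andP[k1 k3]]; first lra.
- apply: le_trans (hr _) _.
  by case: k k1 k3 => [|[|[|[|k]]]] //= _ _; lra.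
- have N1 : 1 <= n.+1%:R :> R by rewrite ler1n.
  have j0 : 0 <= k.-1%:R :> R by rewrite ler0n.
  apply: le_trans (w_ratio_le a0 b0 _ _) _; [lra|lra|].
  apply: le_trans (shifted_ratio_le N1 j0 q0 bq) _; lra.
Qed.
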